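(* Let $f:\{0,1\}^n\to\{0,1\}$ be a Boolean function computed by a minimal read-$k$ DNF formula with size $\alpha$ and maximum width $\beta$. Then $\mathsf N(\overline f)\ge\Omega\!\left(\sqrt{\frac{\alpha}{k\beta}}\right)$.
   Context: $\mathsf N(g)$ is the minimum degree of a real polynomial $p$ with $|p(x)|\le1/3$ whenever $g(x)=0$ and $|p(x)|\ge1$ whenever $g(x)=1$; $\overline f=1-f$. A DNF formula is an OR of terms (ANDs of literals); it is read-$k$ if every variable appears at most $k$ times across the terms; its size is the number of terms and its width is the maximum number of literals in a term. Constants are absolute. *)

From HB Require Import structures.
From mathcomp Require Import all_boot all_order all_algebra.
From mathcomp Require Import Rstruct.
From mathcomp Require Import mpoly.
From Stdlib Require Import Reals ClassicalEpsilon.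

Set Implicit Arguments.
Unset Strict Implicit.
Unset Printing Implicit Defensive.

Import GRing.Theory.

Definition cube (n : nat) := {ffun 'I_n -> bool}.
Definition boolfun (n : nat) := cube n -> bool.

Definition bcompl (n : nat) (f : boolfun n) : boolfun n := fun x => ~~ f x.

(* total degree of a multivariate polynomial (degree of 0 taken as 0) *)
Definition mpdeg (n : nat) (p : {mpoly R[n]}) : nat := (msize p).-1.

Definition cube_pt (n : nat) (x : cube n) : 'I_n -> R :=
  fun i => if x i then R1 else R0.

Definition N_witness (n : nat) (g : boolfun n) (p : {mpoly R[n]}) : Prop :=
  forall x : cube n,
    (g x = false -> Rabs (p.@[cube_pt x]) <= 1/3)%R /\
    (g x = true -> 1 <= Rabs (p.@[cube_pt x]))%R.

Definition N_achievable (n : nat) (g : boolfun n) (d : nat) : Prop :=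
  exists p : {mpoly R[n]}, N_witness g p /\ mpdeg p = d.

Definition N_is_min (n : nat) (g : boolfun n) (d : nat) : Prop :=
  N_achievable g d /\ forall d', N_achievable g d' -> (d <= d')%N.

(* N(g) = minimum degree of such a polynomial (such polynomials always exist,
   e.g. the multilinear interpolant of g; the default 0 is never used). *)
Definition Ndeg (n : nat) (g : boolfun n) : nat :=
  match excluded_middle_informative (exists d, N_is_min g d) with
  | left H => proj1_sig (constructive_indefinite_description _ H)
  | right _ => 0%N
  end.

(* a literal (i, b) means "x_i = b": (i,true) is x_i, (i,false) is its negation *)
Definition literal (n : nat) := ('I_n * bool)%type.
Definition term (n : nat) := seq (literal n).
Definition dnf (n : nat) := seq (term n).

Definition term_eval (n : nat) (t : term n) (x : cube n) : bool :=
  all (fun l : literal n => x l.1 == l.2) t.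

Definition dnf_eval (n : nat) (F : dnf n) (x : cube n) : bool :=
  has (fun t => term_eval t x) F.

Definition computes (n : nat) (F : dnf n) (f : boolfun n) : Prop :=
  forall x, f x = dnf_eval F x.

Definition dnf_size (n : nat) (F : dnf n) : nat := size F.

Definition dnf_width (n : nat) (F : dnf n) : nat :=
  \max_(t <- F) size t.

Definition read_k (n : nat) (k : nat) (F : dnf n) : Prop :=
  forall i : 'I_n, (\sum_(t <- F) count (fun l : literal n => l.1 == i) t <= k)%N.

Definition minimal_dnf (n : nat) (F : dnf n) : Prop :=
  (forall t, t \in F -> exists x, dnf_eval (rem t F) x != dnf_eval F x) /\
  (forall t l, t \in F -> l \in t ->
     exists x, dnf_eval (rem l t :: rem t F) x != dnf_eval F x).

From HB Require Import structures.
From mathcomp Require Import all_boot all_order all_algebra.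
From mathcomp Require Import Rstruct.
From mathcomp Require Import mpoly.
From Stdlib Require Import Reals.
From mathcomp Require Import qpoly.
From Stdlib Require Import Classical_Prop ClassicalEpsilon.
From mathcomp Require Import lra zify ring.
Import GRing.Theory Num.Theory Order.TTheory.
Set Implicit Arguments.
Unset Strict Implicit.
Unset Printing Implicit Defensive.

(* Let a and b be the size and width of F.  Greedily pick terms of F that
   pairwise share no variable: a term meets at most b (k - 1) other terms, so
   there are m >= a / (k b) of them.
   Fix a point x0 with f x0 = 0 (it exists by minimality) and a satisfying
   assignment of each chosen term.  A pattern z in {0,1}^m selects the point that
   follows the j-th assignment on the variables of term j when z_j = 1 and x0
   elsewhere, so a polynomial p of degree d witnessing N(~f) is >= 1 in absolute
   value at z = 0 and <= 1/3 at every other pattern.  Averaging p over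
   z ~ Bernoulli(r)^m gives a univariate P of degree <= d with
   |P(r) - (1 - r)^m P(0)| <= 1/3 on [0, 1].  If m >= 3 + 48 d^2, Lagrange
   interpolation of P at the nodes 3 (1 + 16 i^2) / m, i <= d, whose weights at 0
   sum to at most 10/7 in absolute value, yields |P(0)| <= 5/6 |P(0)|, which is
   absurd.  Comparing r = 0 with r = 1 also gives d >= 1, hence
   a <= m k b <= 51 d^2 k b. *)

Local Open Scope nat_scope.

(** * Lagrange weights at 0 of quadratically spaced nodes *)

Lemma fact_sqr_leq d i : i <= d -> d`! * d`! <= (d - i)`! * (d + i)`!.
Proof.
elim: i => [|i IH] lt_id; first by rewrite subn0 addn0.
apply: leq_trans (IH (ltnW lt_id)) _.
rewrite -[d - i](subnSK lt_id) addnS !factS mulnCA mulnA leq_mul2r.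
by apply/orP; right; rewrite leq_mul2r ltnS; apply/orP; right; lia.
Qed.

Lemma fact_addn d i : (d + i)`! = i`! * \prod_(1 <= j < d.+1) (j + i).
Proof.
elim: d => [|d IH]; first by rewrite big_geq ?muln1.
by rewrite big_nat_recr //= mulnA -IH addSn factS mulnC.
Qed.

Section ProductsSkippingOne.
Variables d i : nat.
Hypothesis i_range : 0 < i <= d.

Let i_mem : i \in index_iota 1 d.+1.
Proof. by rewrite mem_index_iota ltnS. Qed.

Lemma prod_skip_id : (\prod_(1 <= j < d.+1 | j != i) j) * i = d`!.
Proof. by rewrite fact_prod (bigD1_seq i) ?iota_uniq //= mulnC. Qed.

Lemma prod_skip_addn :
  i`! * (\prod_(1 <= j < d.+1 | j != i) (j + i)) * (i + i) = (d + i)`!.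
Proof.
by rewrite [RHS]fact_addn -mulnA [in RHS](bigD1_seq i) ?iota_uniq // /= [_ * (_ + _)]mulnC.
Qed.

Lemma prod_skip_distn :
  \prod_(1 <= j < d.+1 | j != i) `|j - i| = (i.-1)`! * (d - i)`!.
Proof.
have [i_gt0 le_id] := andP i_range.
rewrite (big_cat_nat _ (n := i)) //; last exact: ltnW.
rewrite [X in _ * X = _]big_ltn_cond ?ltnS // eqxx /=.
congr (_ * _).
  rewrite big_nat_cond (eq_bigl (fun j => 1 <= j < i)); last first.
    by move=> j; apply/idP/idP; lia.
  rewrite -big_nat big_nat_rev /= -{1}(prednK i_gt0) fact_prod.
  by apply: congr_big_nat => // j /andP[j_gt0 lt_ji]; lia.
rewrite big_nat_cond (eq_bigl (fun j => i < j < d.+1)); last first.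
  by move=> j; apply/idP/idP; lia.
rewrite -big_nat -[i.+1]add1n big_addn subSn // fact_prod.
by apply: congr_big_nat => // j _; lia.
Qed.

Lemma prod_skip_sqr_leq :
  \prod_(1 <= j < d.+1 | j != i) (j * j) <=
  2 * \prod_(1 <= j < d.+1 | j != i) `|j * j - i * i|.
Proof.
have [i_gt0 le_id] := andP i_range.
rewrite [X in _ <= 2 * X](eq_bigr (fun j : nat => `|j - i| * (j + i))); last first.
  by move=> j _; nia.
rewrite !big_split /= prod_skip_distn.
set X := \prod_(_ <= _ < _ | _) _; set S := \prod_(_ <= _ < _ | _) _.
have e_id : X * i = d`! := prod_skip_id.
have e_add : i`! * S * (i + i) = (d + i)`! := prod_skip_addn.
have fact_i : i`! = i * (i.-1)`! by rewrite -[in LHS](prednK i_gt0) factS prednK.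
have pos : 0 < i * i * i`! by rewrite !muln_gt0 i_gt0 fact_gt0.
rewrite -(leq_pmul2r pos).
have -> : X * X * (i * i * i`!) = d`! * d`! * i`! by rewrite -e_id; ring.
have -> : 2 * ((i.-1)`! * (d - i)`! * S) * (i * i * i`!) = (d - i)`! * (d + i)`! * i`!.
  by rewrite -e_add fact_i; ring.
by rewrite leq_mul2r fact_sqr_leq ?orbT.
Qed.

End ProductsSkippingOne.

Local Open Scope ring_scope.

Lemma prod_skip_sqr_div_le2 (F : realFieldType) d i : (0 < i <= d)%nat ->
  \prod_(1 <= j < d.+1 | j != i) ((j%:R ^+ 2 : F) / `|j%:R ^+ 2 - i%:R ^+ 2|) <= 2.
Proof.
move=> i_range.
have dist_gt0 j : j != i -> 0 < `|j%:R ^+ 2 - i%:R ^+ 2| :> F.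
  by move=> ne_ji; rewrite normr_gt0 subr_eq0 -!natrX eqr_nat eqn_sqr.
rewrite prodf_div ler_pdivrMr ?prodr_gt0 //.
have natr_dist j : `|j%:R ^+ 2 - i%:R ^+ 2| = (`|j * j - i * i|)%nat%:R :> F.
  by rewrite natr_absz intr_norm rmorphB /= !PoszM !rmorphM.
under eq_bigr do rewrite -natrX.
under [X in _ <= _ * X]eq_bigr do rewrite natr_dist.
by rewrite -!natr_prod -natrM ler_nat prod_skip_sqr_leq.
Qed.

Section LagrangeNodes.
Variable F : realFieldType.

Definition node (j : nat) : F := 1 + 16 * j%:R ^+ 2.

Definition sum_inv_sqr d : F := \sum_(1 <= j < d.+1) (j%:R ^+ 2)^-1.

Definition euler_prod d : F := \prod_(1 <= j < d.+1) (1 + (16 * j%:R ^+ 2)^-1).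

(* [lebesgue0 d] is sum_i |l_i(0)| for the Lagrange basis (l_i) on the nodes
   [node 0], ..., [node d]. *)
Definition lebesgue0 d : F :=
  \sum_(0 <= i < d.+1) \prod_(0 <= j < d.+1 | j != i) (node j / `|node j - node i|).

Lemma inv_sqr_ge0 j : 0 <= (j%:R ^+ 2 : F)^-1.
Proof. by rewrite invr_ge0 exprn_ge0. Qed.

Lemma inv_16sqr_ge0 j : 0 <= (16 * j%:R ^+ 2 : F)^-1.
Proof. by rewrite invr_ge0 mulr_ge0 ?exprn_ge0. Qed.

Lemma sum_inv_sqr_ge0 d : 0 <= sum_inv_sqr d.
Proof. by apply: sumr_ge0 => j _; exact: inv_sqr_ge0. Qed.

Lemma inv_sqr_le_telescope (x : F) : 0 < x -> ((x + 1) ^+ 2)^-1 <= x^-1 - (x + 1)^-1.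
Proof.
move=> x_gt0; have x1_gt0 : 0 < x + 1 by lra.
have -> : x^-1 - (x + 1)^-1 = (x * (x + 1))^-1 by field; rewrite !lt0r_neq0.
by rewrite lef_pV2 ?posrE ?exprn_gt0 ?mulr_gt0 // expr2; nra.
Qed.

Lemma sum_inv_sqr_le d : sum_inv_sqr d.+1 <= 2 - (d.+1%:R)^-1.
Proof.
elim: d => [|d IH]; first by rewrite /sum_inv_sqr big_nat1 expr1n invr1; lra.
have -> : sum_inv_sqr d.+2 = sum_inv_sqr d.+1 + (d.+2%:R ^+ 2)^-1.
  by rewrite /sum_inv_sqr big_nat_recr.
move: IH; have := inv_sqr_le_telescope (ltr0Sn F d); rewrite natr1.
set x := (d.+1%:R)^-1; set y := (d.+2%:R)^-1; set z := (_ ^+ 2)^-1; lra.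
Qed.

Lemma sum_inv_sqr_le2 d : sum_inv_sqr d <= 2.
Proof.
case: d => [|d]; first by rewrite /sum_inv_sqr big_geq //; lra.
have : 0 <= (d.+1%:R : F)^-1 by rewrite invr_ge0.
have := sum_inv_sqr_le d; set x := (d.+1%:R)^-1; lra.
Qed.

Lemma euler_prod_ge0 d : 0 <= euler_prod d.
Proof. by apply: prodr_ge0 => j _; rewrite addr_ge0 ?inv_16sqr_ge0. Qed.

Lemma euler_prod_sum_inv_sqr d : euler_prod d * (1 - sum_inv_sqr d / 16) <= 1.
Proof.
elim: d => [|d IH]; first by rewrite /euler_prod /sum_inv_sqr !big_geq // mul0r subr0 mulr1.
have -> : euler_prod d.+1 = euler_prod d * (1 + (d.+1%:R ^+ 2)^-1 / 16).
  by rewrite /euler_prod big_nat_recr //= invfM [16^-1 * _]mulrC.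
have -> : sum_inv_sqr d.+1 = sum_inv_sqr d + (d.+1%:R ^+ 2)^-1.
  by rewrite /sum_inv_sqr big_nat_recr.
move: IH (euler_prod_ge0 d) (sum_inv_sqr_ge0 d) (inv_sqr_ge0 d.+1).
set e := euler_prod d; set s := sum_inv_sqr d; set y := (_ ^+ 2)^-1 => IH e_ge0 s_ge0 y_ge0.
have : 0 <= e * (y * s) by rewrite !mulr_ge0.
have : 0 <= e * (y * y) by rewrite !mulr_ge0.
nra.
Qed.

Lemma euler_prod_le d : euler_prod d <= 8 / 7.
Proof.
move: (euler_prod_sum_inv_sqr d) (euler_prod_ge0 d) (sum_inv_sqr_le2 d).
set e := euler_prod d; set s := sum_inv_sqr d => le_e e_ge0 le_s.
have : 0 <= e * (2 - s) by rewrite mulr_ge0 // subr_ge0.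
nra.
Qed.

Lemma euler_prod_skip_le d i : (0 < i <= d)%nat ->
  \prod_(1 <= j < d.+1 | j != i) (1 + (16 * j%:R ^+ 2)^-1) <= euler_prod d.
Proof.
move=> i_range; rewrite /euler_prod [leRHS](bigD1_seq i) ?iota_uniq //=; last first.
  by rewrite mem_index_iota ltnS.
have : 0 <= \prod_(1 <= j < d.+1 | j != i) (1 + (16 * j%:R ^+ 2)^-1) :> F.
  by apply: prodr_ge0 => j _; rewrite addr_ge0 ?inv_16sqr_ge0.
have := inv_16sqr_ge0 i; set q := (16 * _)^-1; set P := \prod_(_ <= _ < _ | _) _.
nra.
Qed.

Lemma node_ratio_sqr i j : (0 < j)%nat ->
  node j / `|node j - node i| =
  (1 + (16 * j%:R ^+ 2)^-1) * (j%:R ^+ 2 / `|j%:R ^+ 2 - i%:R ^+ 2|).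
Proof.
move=> j_gt0; have j_neq0 : (j%:R : F) != 0 by rewrite pnatr_eq0 -lt0n.
have -> : node j - node i = 16 * (j%:R ^+ 2 - i%:R ^+ 2) by rewrite /node; ring.
rewrite normrM (ger0_norm (_ : 0 <= 16)) //.
have [->|dist_neq0] := eqVneq (`|j%:R ^+ 2 - i%:R ^+ 2| : F) 0.
  by rewrite !(mulr0, invr0).
by rewrite /node; field; rewrite dist_neq0 j_neq0.
Qed.

Lemma node_ratio_head d :
  \prod_(0 <= j < d.+1 | j != 0) (node j / `|node j - node 0|) = euler_prod d.
Proof.
rewrite big_ltn_cond //= /euler_prod.
apply: congr_big_nat => // [j /andP[j_gt0 _]|j /and3P[_ j_gt0 _]]; first by rewrite -lt0n.
rewrite node_ratio_sqr // expr0n subr0 ger0_norm ?exprn_ge0 // divff ?mulr1 //.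
by rewrite expf_neq0 // pnatr_eq0 -lt0n.
Qed.

Lemma node_ratio_le d i : (0 < i <= d)%nat ->
  \prod_(0 <= j < d.+1 | j != i) (node j / `|node j - node i|) <=
  (i%:R ^+ 2)^-1 * (euler_prod d / 8).
Proof.
move=> i_range; have [i_gt0 _] := andP i_range.
rewrite big_ltn_cond // (_ : (0 != i) = true) /=; last by rewrite eq_sym -lt0n.
have -> : node 0 / `|node 0 - node i| = (16 * i%:R ^+ 2)^-1.
  have -> : node 0 - node i = - (16 * i%:R ^+ 2) by rewrite /node; ring.
  by rewrite normrN ger0_norm ?mulr_ge0 ?exprn_ge0 // /node expr0n mulr0 addr0 div1r.
rewrite [leRHS](_ : _ = (16 * i%:R ^+ 2)^-1 * (euler_prod d * 2)); last first.
  by field; rewrite pnatr_eq0 -lt0n.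
apply: ler_wpM2l; first exact: inv_16sqr_ge0.
rewrite big_nat_cond (eq_bigr (fun j =>
    (1 + (16 * j%:R ^+ 2)^-1) * (j%:R ^+ 2 / `|j%:R ^+ 2 - i%:R ^+ 2|))); last first.
  by move=> j /andP[/andP[j_gt0 _] _]; exact: node_ratio_sqr.
rewrite -big_nat_cond big_split /=.
apply: ler_pM; [| |exact: euler_prod_skip_le|exact: prod_skip_sqr_div_le2].
- by apply: prodr_ge0 => j _; rewrite addr_ge0 ?inv_16sqr_ge0.
- by apply: prodr_ge0 => j _; rewrite divr_ge0 ?exprn_ge0.
Qed.

Lemma lebesgue0_le d : lebesgue0 d <= 10 / 7.
Proof.
rewrite /lebesgue0 big_ltn // node_ratio_head.
have sum_le : \sum_(1 <= i < d.+1)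
    \prod_(0 <= j < d.+1 | j != i) (node j / `|node j - node i|) <=
    sum_inv_sqr d * (euler_prod d / 8).
  rewrite /sum_inv_sqr mulr_suml; apply: ler_sum_nat => i /andP[i_gt0 lt_id].
  by apply: node_ratio_le; rewrite i_gt0 -ltnS.
move: sum_le (euler_prod_le d) (euler_prod_ge0 d) (sum_inv_sqr_le2 d).
set L := \sum_(_ <= _ < _) _; set e := euler_prod d; set s := sum_inv_sqr d.
move=> le_L le_e e_ge0 le_s.
have : 0 <= e * (2 - s) by rewrite mulr_ge0 // subr_ge0.
nra.
Qed.

Lemma node_ge0 j : 0 <= node j.
Proof. by rewrite addr_ge0 ?mulr_ge0 ?exprn_ge0. Qed.

Lemma node_inj : injective node.
Proof.
have n16 : (16 : F) != 0 by rewrite pnatr_eq0.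
move=> i j /addrI /(mulfI n16) eq_ij.
by apply/eqP; rewrite -eqn_sqr -(eqr_nat F) !natrX eq_ij.
Qed.

End LagrangeNodes.

Section DecayApproximation.
Variable F : realFieldType.

Definition decay_approx m (P : {poly F}) :=
  forall r, 0 <= r <= 1 -> `|P.[r] - (1 - r) ^+ m * P.[0]| <= 1 / 3.

Lemma bernoulli_le m (y : F) : 0 <= y <= 1 -> (1 - y) ^+ m * (1 + m%:R * y) <= 1.
Proof.
move=> /andP[y_ge0 y_le1]; elim: m => [|m IH]; first by rewrite expr0 mul0r addr0 mulr1.
rewrite exprS -natr1.
have : 0 <= (1 - y) ^+ m by rewrite exprn_ge0 // subr_ge0.
have : 0 <= (1 - y) ^+ m * (m%:R * y * y + y * y).
  by rewrite mulr_ge0 ?exprn_ge0 ?subr_ge0 // addr_ge0 ?mulr_ge0.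
have : 0 <= m%:R :> F by [].
move: IH; set s := _ ^+ m; set M := m%:R; nra.
Qed.

Lemma lagrange0_norm n (x : nat -> F) (i : 'I_n) : (0 < n)%nat -> injective x ->
  `|(tnth (n.-lagrange x) i).[0]| = \prod_(j < n | j != i) (`|x j| / `|x i - x j|).
Proof.
move=> n_gt0 x_inj; rewrite lagrangeE //= hornerCM !horner_prod normrM normfV.
rewrite !normr_prod prodf_div mulrC; congr (_ / _); apply: eq_bigr => j _.
  by rewrite hornerXsubC sub0r normrN.
by rewrite hornerXsubC.
Qed.

Lemma lagrange_weights_ge1 m d (x : nat -> F) (P : {poly F}) :
  injective x -> (forall i, (i <= d)%nat -> 0 <= x i <= 1) -> (size P <= d.+1)%nat ->
  1 <= `|P.[0]| -> decay_approx m P ->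
  1 <= \sum_(i < d.+1)
         (\prod_(j < d.+1 | j != i) (`|x j| / `|x i - x j|)) * ((1 - x i) ^+ m + 1 / 3).
Proof.
move=> x_inj x01 size_P P0_ge1 P_approx.
set A := P.[0]; have A_gt0 : 0 < `|A| by apply: lt_le_trans P0_ge1.
rewrite -(ler_pM2l A_gt0) mulr1 mulr_sumr.
have A_interp : A = \sum_(i < d.+1) P.[x i] * (tnth (d.+1.-lagrange x) i).[0].
  rewrite /A {1}(lagrange_gen (ltn0Sn d) x_inj size_P) horner_sum.
  by apply: eq_bigr => i _; rewrite hornerM hornerC.
rewrite {1}A_interp.
apply: le_trans (ler_norm_sum _ _ _) (ler_sum _ _) => i _.
rewrite normrM lagrange0_norm // mulrC mulrCA.
apply: ler_wpM2l; first by apply: prodr_ge0 => j _; rewrite divr_ge0.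
have x_i01 := x01 i (ltn_ord i).
have decay_ge0 : 0 <= (1 - x i) ^+ m by rewrite exprn_ge0 // subr_ge0; case/andP: x_i01.
have := ler_normD (P.[x i] - (1 - x i) ^+ m * A) ((1 - x i) ^+ m * A).
rewrite subrK normrM (ger0_norm decay_ge0).
move: (P_approx _ x_i01) decay_ge0 P0_ge1; rewrite -/A.
set s := _ ^+ m; set a := `|A|; nra.
Qed.

Lemma three_node i : 3 * node F i = (3 + 48 * (i * i))%:R.
Proof. by rewrite /node natrD !natrM; ring. Qed.

Section ScaledNodes.
Variables m d : nat.
Hypothesis m_large : (3 + 48 * (d * d) <= m)%nat.

Let m_gt0 : 0 < m%:R :> F.
Proof. by rewrite ltr0n; apply: leq_trans m_large; rewrite addSn. Qed.

Definition scaled_node i := 3 / m%:R * node F i.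

Lemma scaled_node01 i : (i <= d)%nat -> 0 <= scaled_node i <= 1.
Proof.
move=> le_id; rewrite mulr_ge0 ?divr_ge0 ?node_ge0 //=.
rewrite /scaled_node mulrAC ler_pdivrMr // mul1r three_node ler_nat.
by apply: leq_trans m_large; rewrite leq_add2l leq_mul2l leq_mul.
Qed.

Lemma scaled_node_decay i : (i <= d)%nat -> (1 - scaled_node i) ^+ m <= 1 / 4.
Proof.
move=> le_id; have x01 := scaled_node01 le_id.
have m_x : m%:R * scaled_node i = 3 * node F i.
  by rewrite mulrA mulrCA divff ?mulr1 // lt0r_neq0.
have : 3 <= 3 * node F i by rewrite three_node ler_nat leq_addr.
have : 0 <= (1 - scaled_node i) ^+ m by rewrite exprn_ge0 // subr_ge0; case/andP: x01.
move: (bernoulli_le m x01); rewrite m_x; set s := _ ^+ m; set y := 3 * _; nra.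
Qed.

Lemma scaled_node_ratio i j :
  `|scaled_node j| / `|scaled_node i - scaled_node j| = node F j / `|node F j - node F i|.
Proof.
have c_gt0 : 0 < 3 / m%:R :> F by rewrite divr_gt0.
rewrite /scaled_node -mulrBr normrM [`|_ * (_ - _)|]normrM (gtr0_norm c_gt0).
rewrite (ger0_norm (node_ge0 _ _)) distrC.
have [->|ne0] := eqVneq (`|node F j - node F i|) 0; first by rewrite !(mulr0, invr0).
by field; rewrite ne0 lt0r_neq0.
Qed.

Lemma scaled_node_weights_lt1 :
  \sum_(i < d.+1) (\prod_(j < d.+1 | j != i)
     (`|scaled_node j| / `|scaled_node i - scaled_node j|)) *
     ((1 - scaled_node i) ^+ m + 1 / 3) < 1.
Proof.
apply: le_lt_trans (_ : lebesgue0 F d * (7 / 12) < 1); last first.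
  by have := lebesgue0_le F d; lra.
rewrite /lebesgue0 big_mkord mulr_suml; apply: ler_sum => i _.
rewrite big_mkord; under eq_bigr do rewrite scaled_node_ratio.
apply: ler_wpM2l; first by apply: prodr_ge0 => j _; rewrite divr_ge0 ?node_ge0.
by have := scaled_node_decay (ltn_ord i); lra.
Qed.

End ScaledNodes.

Lemma scaled_node_inj m : (0 < m)%nat -> injective (scaled_node m).
Proof.
move=> m_gt0; have c_neq0 : 3 / m%:R != 0 :> F.
  by rewrite mulf_neq0 ?invr_eq0 ?pnatr_eq0 -?lt0n.
by move=> i j /(mulfI c_neq0) /node_inj.
Qed.

Lemma decay_approx_size_bound m d (P : {poly F}) :
  (0 < m)%nat -> (size P <= d.+1)%nat -> 1 <= `|P.[0]| -> decay_approx m P ->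
  (0 < d)%nat /\ (m < 3 + 48 * (d * d))%nat.
Proof.
move=> m_gt0 size_P P0_ge1 P_approx; split.
  case: d size_P => [/size1_polyC P_const|//]; exfalso.
  have := P_approx 1; rewrite ler01 lexx subrr expr0n eqn0Ngt m_gt0 mul0r subr0.
  by rewrite P_const hornerC => /(_ isT); rewrite P_const hornerC in P0_ge1; lra.
rewrite ltnNge; apply/negP => m_large.
have := lagrange_weights_ge1 (scaled_node_inj m_gt0) (scaled_node01 m_large) size_P
  P0_ge1 P_approx.
by rewrite leNgt scaled_node_weights_lt1.
Qed.

End DecayApproximation.

(** * Averaging over Bernoulli patterns of blocks *)

Lemma big_split_blocks (T : Type) (idx : T) (op : Monoid.com_law idx) (n m : nat)
    (block : 'I_n -> option 'I_m) (G : 'I_n -> T) :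
  \big[op/idx]_i G i =
  op (\big[op/idx]_(i | block i == None) G i)
     (\big[op/idx]_(j : 'I_m) \big[op/idx]_(i | block i == Some j) G i).
Proof.
rewrite (bigID (fun i => block i == None)) /=; congr (op _ _).
rewrite (partition_big block (fun o => o != None)) //=.
rewrite (reindex_omap Some (fun o : option 'I_m => o)); last by case.
apply: eq_big => [j|j _]; first by rewrite /= eqxx.
by apply: eq_bigl => i; case: (block i).
Qed.

Section BlockAverage.
Variables (R : comNzRingType) (n m : nat) (block : 'I_n -> option 'I_m).
Variables (v0 v1 : 'I_n -> R).

Definition block_point (z : {ffun 'I_m -> bool}) (i : 'I_n) : R :=
  if block i is Some j then (if z j then v1 i else v0 i) else v0 i.

Definition bernoulli_weight (r : R) (z : {ffun 'I_m -> bool}) : R :=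
  \prod_j (if z j then r else 1 - r).

Definition block_factor (e : 'X_{1..n}) (j : 'I_m) (b : bool) : R :=
  \prod_(i | block i == Some j) (if b then v1 i else v0 i) ^+ e i.

Definition free_factor (e : 'X_{1..n}) : R := \prod_(i | block i == None) v0 i ^+ e i.

Definition block_linear (e : 'X_{1..n}) (j : 'I_m) : {poly R} :=
  (block_factor e j false)%:P + (block_factor e j true - block_factor e j false) *: 'X.

Definition monomial_average (e : 'X_{1..n}) : {poly R} :=
  free_factor e *: \prod_j block_linear e j.

Lemma monomial_block_point (e : 'X_{1..n}) z :
  \prod_i block_point z i ^+ e i = free_factor e * \prod_j block_factor e j (z j).
Proof.
rewrite (big_split_blocks _ block); congr (_ * _).
  by apply: eq_bigr => i /eqP block_i; rewrite /block_point block_i.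
apply: eq_bigr => j _; apply: eq_bigr => i /eqP block_i.
by rewrite /block_point block_i; case: (z j).
Qed.

Lemma horner_monomial_average (e : 'X_{1..n}) r :
  (monomial_average e).[r] = \sum_z bernoulli_weight r z * \prod_i block_point z i ^+ e i.
Proof.
rewrite hornerZ horner_prod.
under [RHS]eq_bigr do rewrite monomial_block_point mulrCA.
rewrite -mulr_sumr; congr (_ * _).
under [RHS]eq_bigr do rewrite /bernoulli_weight -big_split /=.
rewrite -(bigA_distr_bigA (fun j b => (if b then r else 1 - r) * block_factor e j b)).
apply: eq_bigr => j _; rewrite big_bool /= /block_linear hornerD hornerC hornerZ hornerX.
ring.
Qed.

Lemma size_block_linear (e : 'X_{1..n}) j :
  (size (block_linear e j) <= 1 + \sum_(i | block i == Some j) e i)%nat.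
Proof.
have [sum0|sum_gt0] := posnP (\sum_(i | block i == Some j) e i).
  have factor1 b : block_factor e j b = 1.
    apply: big1 => i block_i; move/eqP: sum0; rewrite sum_nat_eq0 => /forallP/(_ i).
    by rewrite block_i => /eqP ->; rewrite expr0.
  rewrite /block_linear !factor1 subrr scale0r addr0.
  exact: leq_trans (size_polyC_leq1 _) (leq_addr _ _).
apply: leq_trans (size_polyD _ _) _.
rewrite geq_max (leq_trans (size_polyC_leq1 _) (leq_addr _ _)) add1n.
by apply: leq_trans (size_scale_leq _ _) _; rewrite size_polyX ltnS.
Qed.

Lemma size_monomial_average (e : 'X_{1..n}) : (size (monomial_average e) <= (mdeg e).+1)%nat.
Proof.
have sum_le : (\sum_j size (block_linear e j) <= m + mdeg e)%nat.
  apply: (@leq_trans (\sum_j (1 + \sum_(i | block i == Some j) e i))%nat).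
    by apply: leq_sum => j _; exact: size_block_linear.
  rewrite big_split /= sum1_card card_ord leq_add2l.
  by rewrite mdegE (big_split_blocks _ block) leq_addl.
apply: leq_trans (size_scale_leq _ _) _; apply: leq_trans (size_poly_prod_leq _ _) _.
have -> : #|(xpredT : pred 'I_m)| = m by rewrite -[RHS](card_ord m); apply: eq_card.
move: sum_le; generalize (\sum_j size (block_linear e j))%nat => S; lia.
Qed.

Definition block_average (p : {mpoly R[n]}) (r : R) : R :=
  \sum_z bernoulli_weight r z * p.@[block_point z].

Lemma block_average_poly (p : {mpoly R[n]}) :
  exists P : {poly R}, (size P <= msize p)%nat /\ forall r, P.[r] = block_average p r.
Proof.
exists (\sum_(e <- msupp p) p@_e *: monomial_average e); split.
  rewrite big_seq; apply: (big_ind (fun q : {poly R} => size q <= msize p)%nat).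
  - by rewrite size_poly0.
  - by move=> q1 q2 le1 le2; apply: leq_trans (size_polyD _ _) _; rewrite geq_max le1.
  - move=> e e_supp; apply: leq_trans (size_scale_leq _ _) _.
    exact: leq_trans (size_monomial_average e) (msize_mdeg_lt e_supp).
move=> r; rewrite horner_sum /block_average.
under eq_bigr do rewrite hornerZ horner_monomial_average mulr_sumr.
under [RHS]eq_bigr do rewrite mevalE mulr_sumr.
rewrite exchange_big /=; apply: eq_bigr => z _; apply: eq_bigr => e _.
by rewrite mulrCA.
Qed.

End BlockAverage.

Lemma ffun_neq_false_exists (T : finType) (z : {ffun T -> bool}) :
  z != [ffun=> false] -> exists j, z j.
Proof.
move=> z_neq; apply/existsP; apply: contraR z_neq => /existsPn z_false.
by apply/eqP/ffunP => j; rewrite ffunE; apply/negbTE.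
Qed.

Section BlockAverageDecay.
Variables (F : realFieldType) (n m : nat) (block : 'I_n -> option 'I_m).
Variables (v0 v1 : 'I_n -> F).

Local Notation zero := ([ffun=> false] : {ffun 'I_m -> bool}).
Local Notation point := (block_point block v0 v1).

Lemma sum_bernoulli_weight (r : F) :
  \sum_(z : {ffun 'I_m -> bool}) bernoulli_weight r z = 1.
Proof.
rewrite -(bigA_distr_bigA (fun (j : 'I_m) (b : bool) => if b then r else 1 - r)).
by apply: big1 => j _; rewrite big_bool /= subrKC.
Qed.

Lemma bernoulli_weight_zero (r : F) : bernoulli_weight r zero = (1 - r) ^+ m.
Proof.
rewrite /bernoulli_weight (eq_bigr (fun _ => 1 - r)) ?prodr_const ?card_ord //.
by move=> j _; rewrite ffunE.
Qed.

Lemma bernoulli_weight0 (z : {ffun 'I_m -> bool}) :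
  z != zero -> bernoulli_weight (0 : F) z = 0.
Proof.
by case/ffun_neq_false_exists => j z_j; rewrite /bernoulli_weight (bigD1 j) //= z_j mul0r.
Qed.

Lemma bernoulli_weight_ge0 (r : F) (z : {ffun 'I_m -> bool}) :
  0 <= r <= 1 -> 0 <= bernoulli_weight r z.
Proof.
by case/andP=> r_ge0 r_le1; apply: prodr_ge0 => j _; case: (z j); rewrite ?subr_ge0.
Qed.

Lemma block_average_decay (p : {mpoly F[n]}) :
  (forall z, z != zero -> `|p.@[point z]| <= 1 / 3) ->
  exists P : {poly F},
    [/\ (size P <= msize p)%nat, P.[0] = p.@[point zero] & decay_approx m P].
Proof.
move=> small; have [P [size_P P_avg]] := block_average_poly block v0 v1 p.
have P0 : P.[0] = p.@[point zero].
  rewrite P_avg /block_average (bigD1 zero) //= big1 ?addr0.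
    by rewrite bernoulli_weight_zero subr0 expr1n mul1r.
  by move=> z z_neq; rewrite bernoulli_weight0 // mul0r.
exists P; split=> // r r01; rewrite P0 P_avg /block_average (bigD1 zero) //=.
rewrite bernoulli_weight_zero addrC addrK.
apply: le_trans (ler_norm_sum _ _ _) _.
apply: le_trans (_ : \sum_(z | z != zero) bernoulli_weight r z * (1 / 3) <= _).
  apply: ler_sum => z z_neq; rewrite normrM ger0_norm ?bernoulli_weight_ge0 //.
  by apply: ler_wpM2l; [exact: bernoulli_weight_ge0 | exact: small].
rewrite -mulr_suml -[leRHS]mul1r; apply: ler_wpM2r; first lra.
rewrite -[leRHS](sum_bernoulli_weight r) [leRHS](bigD1 zero) //=.
by rewrite lerDr bernoulli_weight_ge0.
Qed.

Lemma block_embedding_bound (p : {mpoly F[n]}) d :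
  (0 < m)%nat -> (msize p <= d.+1)%nat -> 1 <= `|p.@[point zero]| ->
  (forall z, z != zero -> `|p.@[point z]| <= 1 / 3) ->
  (0 < d)%nat /\ (m < 3 + 48 * (d * d))%nat.
Proof.
move=> m_gt0 size_p p0_ge1 /block_average_decay [P [size_P P0 P_approx]].
apply: decay_approx_size_bound P_approx => //; last by rewrite P0.
exact: leq_trans size_P size_p.
Qed.

End BlockAverageDecay.

Local Open Scope nat_scope.

(** * Disjoint terms of a minimal read-k DNF *)

Lemma count_has_le_sum (A B : Type) (P : A -> B -> bool) (s : seq A) (r : seq B) :
  count (fun b => has (P^~ b) s) r <= \sum_(a <- s) count (P a) r.
Proof.
elim: s => [|a s IH] /=; first by rewrite big_nil (eq_count (a2 := pred0)) ?count_pred0.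
rewrite big_cons; apply: leq_trans (leq_add (leqnn _) IH).
by rewrite -(count_predUI (P a)) leq_addr.
Qed.

Section DisjointTerms.
Variable n : nat.
Implicit Types (t : term n) (F : dnf n).

Definition var_count (i : 'I_n) t := count (fun l : literal n => l.1 == i) t.

Definition has_var (i : 'I_n) t := has (fun l : literal n => l.1 == i) t.

Definition terms_disjoint t t' := all (fun l : literal n => ~~ has_var l.1 t') t.

Lemma terms_disjointC t t' : terms_disjoint t t' = terms_disjoint t' t.
Proof.
apply/allP/allP => disj l l_in; apply/hasPn => l' l'_in; apply/negP => /eqP eq_l;
  by have /hasPn/(_ l l_in) := disj l' l'_in; rewrite eq_l eqxx.
Qed.

Lemma count_conflicts_le k t F :
  (forall i, \sum_(s <- t :: F) var_count i s <= k) ->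
  count (predC (terms_disjoint t)) F <= size t * (k - 1).
Proof.
move=> read_k.
rewrite (eq_count (a2 := fun s => has (fun l : literal n => has_var l.1 s) t)); last first.
  by move=> s; rewrite /= /terms_disjoint -has_predC; apply: eq_has => l /=; rewrite negbK.
apply: leq_trans (count_has_le_sum _ _ _) _.
apply: leq_trans (_ : _ <= \sum_(l <- t) (k - 1)) _; last first.
  by rewrite big_const_seq count_predT iter_addn_0 mulnC.
rewrite !big_seq; apply: leq_sum => l l_in.
apply: leq_trans (_ : _ <= \sum_(s <- F) var_count l.1 s) _.
  rewrite -sum1_count big_mkcond /=; apply: leq_sum => s _.
  by rewrite /has_var has_count; case: ifP.
have : 0 < var_count l.1 t by rewrite /var_count -has_count; apply/hasP; exists l.
have := read_k l.1; rewrite big_cons /=.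
move: (\sum_(s <- F) _) (var_count l.1 t) => S c; lia.
Qed.

Lemma disjoint_subfamily k b F : 0 < k -> 0 < b ->
  (forall t, t \in F -> size t <= b) ->
  (forall i, \sum_(t <- F) var_count i t <= k) ->
  exists S : dnf n, [/\ all (mem F) S, pairwise terms_disjoint S & size F <= size S * (k * b)].
Proof.
move=> k_gt0 b_gt0; move: {2}(size F) (leqnn (size F)) => N.
elim: N F => [|N IH] [|t F] //= size_F width_F read_k; try by exists [::].
(* Keep [t] and drop the at most [size t * (k - 1)] terms meeting it. *)
set F' := filter (terms_disjoint t) F.
have [|s s_in|i|S [S_sub S_disj S_size]] := IH F'.
- by rewrite size_filter; apply: leq_trans (count_size _ _) _.
- by move: s_in; rewrite mem_filter => /andP[_ s_F]; apply: width_F; rewrite in_cons s_F orbT.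
- apply: leq_trans (read_k i); rewrite big_cons big_filter big_mkcond /=.
  by apply: leq_trans (leq_addl _ _); apply: leq_sum => s _; case: ifP.
exists (t :: S); split.
- rewrite /= mem_head /=; apply/allP => s /(allP S_sub).
  by rewrite /= mem_filter in_cons => /andP[_ ->]; rewrite orbT.
- rewrite /= S_disj andbT; apply/allP => s /(allP S_sub).
  by rewrite /= mem_filter => /andP[].
have := count_conflicts_le read_k; have := count_predC (terms_disjoint t) F.
rewrite -size_filter -/F'.
have : size t <= b by apply: width_F; exact: mem_head.
move: S_size; rewrite /=; nia.
Qed.

End DisjointTerms.

Section MinimalDnf.
Variable n : nat.
Implicit Types (t : term n) (F : dnf n) (x : cube n).

Lemma dnf_eval_rem F t x : t \in F -> dnf_eval F x = term_eval t x || dnf_eval (rem t F) x.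
Proof. by move=> t_F; rewrite /dnf_eval (perm_has _ (perm_to_rem t_F)). Qed.

Lemma minimal_dnf_term_sat F t : minimal_dnf F -> t \in F -> exists x, term_eval t x.
Proof.
case=> [drop_term _] t_F; have [x changed] := drop_term t t_F; exists x; move: changed.
by rewrite (dnf_eval_rem _ t_F); case: (term_eval t x) => //=; rewrite eqxx.
Qed.

Lemma minimal_dnf_false F t l : minimal_dnf F -> t \in F -> l \in t ->
  exists x, dnf_eval F x = false.
Proof.
case=> [_ drop_lit] t_F l_t; have [x changed] := drop_lit t l t_F l_t; exists x.
have weaker : term_eval t x -> term_eval (rem l t) x.
  by move/allP=> t_x; apply/allP => l' /(mem_subseq (rem_subseq _ _)); exact: t_x.
move: changed; rewrite (dnf_eval_rem _ t_F) /dnf_eval /= -/(dnf_eval (rem t F) x).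
by move: weaker; case: (term_eval t x); case: (term_eval (rem l t) x);
  case: (dnf_eval (rem t F) x) => //= /(_ isT).
Qed.

Lemma minimal_dnf_false_point F : minimal_dnf F -> (0 < dnf_width F)%nat ->
  exists x, dnf_eval F x = false.
Proof.
move=> min_F width_gt0; have /hasP[[|l t] t_F //= _] : has (fun t => 0 < size t)%nat F.
  apply: contraLR width_gt0 => /hasPn size0; rewrite -leqNgt.
  by apply/bigmax_leqP_seq => t t_F _; rewrite leqNgt size0.
exact: minimal_dnf_false min_F t_F (mem_head l t).
Qed.
End MinimalDnf.

Section TermEmbedding.
Variables (n : nat) (S : dnf n) (x0 : cube n).
Hypothesis S_disj : pairwise (@terms_disjoint n) S.
Hypothesis S_sat : forall t, t \in S -> exists x, term_eval t x.

Local Notation m := (size S).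
Local Notation T j := (nth [::] S j).

Lemma terms_disjoint_nth (j1 j2 : 'I_m) : j1 != j2 -> terms_disjoint (T j1) (T j2).
Proof.
have /(pairwiseP [::]) S_nth := S_disj.
case: (ltngtP j1 j2) => [lt_j|lt_j|/val_inj -> /eqP//] _.
  by apply: S_nth; rewrite ?inE.
by rewrite terms_disjointC; apply: S_nth; rewrite ?inE.
Qed.

Definition term_block (i : 'I_n) : option 'I_m := [pick j : 'I_m | has_var i (T j)].

Lemma term_blockE (j : 'I_m) i : has_var i (T j) -> term_block i = Some j.
Proof.
move=> i_j; rewrite /term_block; case: pickP => [j' i_j'|no_j]; last by rewrite no_j in i_j.
have [->//|ne] := eqVneq j' j; move: i_j' => /hasP[l l_j' /eqP l_i].
by have /allP/(_ l l_j') := terms_disjoint_nth ne; rewrite /= l_i i_j.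
Qed.

Definition term_sat (j : 'I_m) : cube n := odflt x0 [pick y | term_eval (T j) y].

Lemma term_satP (j : 'I_m) : term_eval (T j) (term_sat j).
Proof.
rewrite /term_sat; case: pickP => [y //|no_sat].
have [y y_sat] := S_sat (mem_nth [::] (ltn_ord j)).
by move: (no_sat y); rewrite /= y_sat.
Qed.

Definition term_embed (z : {ffun 'I_m -> bool}) : cube n :=
  [ffun i => if term_block i is Some j then (if z j then term_sat j i else x0 i) else x0 i].

Lemma term_embed_false : term_embed [ffun=> false] = x0.
Proof. by apply/ffunP => i; rewrite !ffunE; case: (term_block i) => // j; rewrite ffunE. Qed.

Lemma term_embed_sat z : z != [ffun=> false] -> dnf_eval S (term_embed z).
Proof.
case/ffun_neq_false_exists => j z_j; apply/hasP; exists (T j); first exact: mem_nth.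
apply/allP => l l_j; rewrite ffunE (term_blockE (j := j)); last by apply/hasP; exists l.
by rewrite z_j; apply: (allP (term_satP j)).
Qed.

Lemma cube_pt_term_embed z :
  cube_pt (term_embed z) =1
  block_point term_block (cube_pt (term_embed [ffun=> false]))
              (cube_pt (term_embed [ffun=> true])) z.
Proof.
move=> i; rewrite /cube_pt /block_point !ffunE.
by case: (term_block i) => // j; rewrite !ffunE; case: (z j).
Qed.

End TermEmbedding.

Local Open Scope ring_scope.

(** * The approximate degree N *)

Lemma N_witnessE n (g : boolfun n) (p : {mpoly R[n]}) :
  N_witness g p <->
  forall x, (g x = false -> `|p.@[cube_pt x]| <= 1 / 3) /\
            (g x = true -> 1 <= `|p.@[cube_pt x]|).
Proof.
rewrite /N_witness (_ : Rdiv 1 3 = 1 / 3) ?RealsE //.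
split=> wit x; have [small large] := wit x.
  by split=> gx; rewrite -RabsE; apply/RleP; [exact: small | exact: large].
by split=> gx; apply/RleP; rewrite RabsE; [exact: small | exact: large].
Qed.

Lemma N_witness_disjoint_terms_bound n (F S : dnf n) (f : boolfun n) (x0 : cube n)
    (p : {mpoly R[n]}) :
  computes F f -> all (mem F) S -> pairwise (@terms_disjoint n) S ->
  (forall t, t \in S -> exists x, term_eval t x) -> f x0 = false ->
  N_witness (bcompl f) p -> (0 < size S)%nat ->
  (0 < mpdeg p)%nat /\ (size S < 3 + 48 * (mpdeg p * mpdeg p))%nat.
Proof.
move=> F_f S_F S_disj S_sat f_x0 /N_witnessE p_wit S_gt0.
pose zero : {ffun 'I_(size S) -> bool} := [ffun=> false].
pose one : {ffun 'I_(size S) -> bool} := [ffun=> true].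
have p_embed z :
    p.@[block_point (term_block S) (cube_pt (term_embed x0 zero))
                    (cube_pt (term_embed x0 one)) z] =
    p.@[cube_pt (term_embed x0 z)].
  by apply: meval_eq => i; rewrite cube_pt_term_embed.
have p_zero : 1 <= `|p.@[cube_pt (term_embed x0 zero)]|.
  by apply: (p_wit _).2; rewrite /bcompl term_embed_false f_x0.
have p_small z : z != zero -> `|p.@[cube_pt (term_embed x0 z)]| <= 1 / 3.
  move=> z_neq; apply: (p_wit _).1; rewrite /bcompl F_f negbF //.
  have /hasP[t t_S t_z] := term_embed_sat x0 S_disj S_sat z_neq.
  by apply/hasP; exists t => //; exact: (allP S_F).
rewrite -p_embed in p_zero.
by apply: block_embedding_bound S_gt0 (leqSpred _) p_zero _ => z /p_small; rewrite p_embed.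
Qed.

Section NDegree.
Variable n : nat.

Definition cube_indicator (x : cube n) : {mpoly R[n]} :=
  \prod_i (if x i then 'X_i else 1 - 'X_i).

Lemma meval_cube_indicator (x y : cube n) :
  (cube_indicator x).@[cube_pt y] = (x == y)%:R.
Proof.
rewrite /cube_indicator (big_morph _ (mevalM _) (meval1 _)).
have [<-|ne_xy] := eqVneq x y.
  apply: big1 => i _; case x_i: (x i);
  by rewrite ?mevalB ?meval1 mevalXU /cube_pt x_i ?subr0.
have /existsP[i ne_i] : [exists i, x i != y i].
  move: ne_xy; apply: contraNT => /existsPn eq_xy.
  by apply/eqP/ffunP => i; apply/eqP/negPn/eq_xy.
rewrite (bigD1 i) //=; move: ne_i.
by case x_i: (x i); case y_i: (y i) => //= _;
  rewrite ?mevalB ?meval1 mevalXU /cube_pt y_i ?subrr mul0r.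
Qed.

Lemma N_witness_interpolant (g : boolfun n) : N_witness g (\sum_(x | g x) cube_indicator x).
Proof.
apply/N_witnessE => y; rewrite (big_morph _ (mevalD _) (meval0 _)).
under eq_bigr do rewrite meval_cube_indicator.
case: (boolP (g y)) => [g_y|/negbTE g_y]; split=> // _.
  by rewrite (bigD1 y) //= eqxx big1 ?addr0 ?normr1 // => x /andP[_ /negbTE ->].
by rewrite big1 ?normr0 ?divr_ge0 // => x g_x; case: eqP g_x => // ->; rewrite g_y.
Qed.

Lemma exists_least_nat (P : nat -> Prop) : (exists d, P d) ->
  exists d, P d /\ forall d', P d' -> (d <= d')%nat.
Proof.
move=> [d Pd]; elim/ltn_ind: d Pd => d IH Pd.
have [[d' [Pd' lt_d'd]]|no_smaller] := classic (exists d', P d' /\ (d' < d)%nat).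
  exact: IH lt_d'd Pd'.
exists d; split=> // d' Pd'; rewrite leqNgt; apply/negP => lt_d'd.
by apply: no_smaller; exists d'.
Qed.

Lemma Ndeg_achievable (g : boolfun n) : N_achievable g (Ndeg g).
Proof.
have [d min_d] : exists d, N_is_min g d.
  apply: exists_least_nat; exists (mpdeg (\sum_(x | g x) cube_indicator x)).
  by exists (\sum_(x | g x) cube_indicator x); split; first exact: N_witness_interpolant.
rewrite /Ndeg; case: excluded_middle_informative => [ex_min|]; last by case; exists d.
exact: (proj1 (proj2_sig (constructive_indefinite_description _ ex_min))).
Qed.

End NDegree.

Lemma dnf_size_le_Ndeg n k (f : boolfun n) (F : dnf n) :
  computes F f -> read_k k F -> minimal_dnf F -> (0 < k)%nat -> (0 < dnf_width F)%nat ->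
  (dnf_size F <= 51 * (Ndeg (bcompl f) * Ndeg (bcompl f)) * (k * dnf_width F))%nat.
Proof.
move=> F_f read_kF min_F k_gt0 width_gt0.
have width_F t : t \in F -> (size t <= dnf_width F)%nat by move=> t_F; exact: leq_bigmax_seq.
have [S [S_F S_disj S_size]] := disjoint_subfamily k_gt0 width_gt0 width_F read_kF.
have [S0|S_gt0] := posnP (size S).
  by move: S_size; rewrite S0 mul0n leqn0 => /eqP; rewrite /dnf_size => ->.
have [x0 F_x0] := minimal_dnf_false_point min_F width_gt0.
have f_x0 : f x0 = false by rewrite F_f.
have S_sat t : t \in S -> exists x, term_eval t x.
  by move=> /(allP S_F); exact: minimal_dnf_term_sat.
have [p [p_wit <-]] := Ndeg_achievable (bcompl f).
have [d_gt0 S_lt] := N_witness_disjoint_terms_bound F_f S_F S_disj S_sat f_x0 p_wit S_gt0.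
by apply: leq_trans S_size _; rewrite leq_mul2r; apply/orP; right; nia.
Qed.

Lemma inv_sqrt51_mul_sqrt_ratio_le (a k b d : nat) :
  ((0 < k * b)%nat -> (a <= 51 * (d * d) * (k * b))%nat) ->
  (/ sqrt 51 * sqrt (INR a / (INR k * INR b)) <= INR d)%R.
Proof.
move=> bound; apply/RleP; rewrite !RealsE /=.
(* For [k * b = 0] the left-hand side vanishes, as division by [0] yields [0]. *)
have [kb0|kb_gt0] := posnP (k * b).
  by rewrite -natrM kb0 invr0 mulr0 sqrtr0 mulr0 ler0n.
rewrite ler_pdivrMl ?sqrtr_gt0 ?ltr0n // -[d%:R]ger0_norm ?ler0n // -sqrtr_sqr.
rewrite -sqrtrM ?ler0n //; apply: ler_wsqrtr.
by rewrite ler_pdivrMr -?natrM ?ltr0n // expr2 -!natrM ler_nat bound.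
Qed.

Theorem lemma3p22 :
  exists c : R, (0 < c)%R /\
    forall (n k : nat) (f : boolfun n) (F : dnf n),
      computes F f -> read_k k F -> minimal_dnf F ->
      (c * sqrt (INR (dnf_size F) / (INR k * INR (dnf_width F)))
         <= INR (Ndeg (bcompl f)))%R.
Proof.
exists (/ sqrt 51)%R; split.
  by apply/RltP; rewrite !RealsE invr_gt0 sqrtr_gt0 ltr0n.
move=> n k f F F_f read_kF min_F; apply: inv_sqrt51_mul_sqrt_ratio_le.
by rewrite muln_gt0 => /andP[k_gt0 width_gt0]; exact: dnf_size_le_Ndeg.
Qed.
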